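(* The monads $\mathbb J=(J,\eta,\psi)$ and $\mathbb I=(I,\eta,\zeta)$ are not isomorphic; that is, there is no natural isomorphism $k\colon I\to J$ of functors with $k\circ\eta=\eta$ and $k_X\circ\zeta_X=\psi_X\circ J(k_X)\circ k_{I(X)}$ for all $X$.
   Context: A max-min measure on a compact Hausdorff space $X$ is a functional $\mu\colon C(X)\to\mathbb R$ (not assumed continuous) with $\mu(c_X)=c$ for constants, $\mu(\varphi\vee\psi)=\mu(\varphi)\vee\mu(\psi)$, $\mu(c\wedge\varphi)=c\wedge\mu(\varphi)$ for $c\in\mathbb R$. A max-plus (idempotent) measure is a functional $\mu\colon C(X)\to\mathbb R$ with $\mu(c_X)=c$, $\mu(\varphi\vee\psi)=\mu(\varphi)\vee\mu(\psi)$, $\mu(c_X+\varphi)=c+\mu(\varphi)$. $J(X)$, $I(X)$ are the respective sets with the topology of pointwise convergence on $C(X)$; on maps, $J(f)(\mu)=\mu(\cdot\circ f)$, $I(f)(\mu)=\mu(\cdot\circ f)$. In both monads the unit is $\eta_X(x)=\delta_x$, $\delta_x(\varphi)=\varphi(x)$. The multiplications are $\psi_X\colon J(J(X))\to J(X)$, $\psi_X(M)(\varphi)=M(\bar\varphi)$, and $\zeta_X\colon I(I(X))\to I(X)$, $\zeta_X(M)(\varphi)=M(\bar\varphi)$, where $\bar\varphi(\mu)=\mu(\varphi)$; in particular $\zeta_X(\vee_{i=1}^n(\beta_i+\delta_{\mu_i}))=\vee_{i=1}^n(\beta_i+\mu_i)$ for $\beta_i\in[-\infty,0]$ with $\max_i\beta_i=0$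 and $\mu_i\in I(X)$, and $\psi_X(\vee_{i=1}^n(\alpha_i\wedge\delta_{\mu_i}))=\vee_{i=1}^n(\alpha_i\wedge\mu_i)$ for $\alpha_i\in\mathbb R\cup\{\infty\}$ with $\max_i\alpha_i=\infty$, $\mu_i\in J(X)$. The monads are considered on the category $\mathbf{Comp}$ of compact Hausdorff spaces. *)

From Stdlib Require Import Reals Lra List.
Open Scope R_scope.
Set Implicit Arguments.

Record TopSpace := {
  carrier :> Type;
  open : (carrier -> Prop) -> Prop;
  open_full : open (fun _ => True);
  open_inter : forall U V, open U -> open V -> open (fun x => U x /\ V x);
  open_union : forall F : (carrier -> Prop) -> Prop,
      (forall U, F U -> open U) -> open (fun x => exists U, F U /\ U x)
}.

Definition compact (X : TopSpace) : Prop :=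
  forall F : (X -> Prop) -> Prop,
    (forall U, F U -> open X U) ->
    (forall x, exists U, F U /\ U x) ->
    exists l : list (X -> Prop),
      (forall U, In U l -> F U) /\ (forall x, exists U, In U l /\ U x).

Definition hausdorff (X : TopSpace) : Prop :=
  forall x y : X, x <> y ->
    exists U V, open X U /\ open X V /\ U x /\ V y /\ (forall z, ~ (U z /\ V z)).

Definition CompHaus (X : TopSpace) : Prop := compact X /\ hausdorff X.

Definition continuous {X Y : TopSpace} (f : X -> Y) : Prop :=
  forall V, open Y V -> open X (fun x => V (f x)).

Record cmap (X Y : TopSpace) := { cfun :> X -> Y; cfun_cont : continuous cfun }.

Definition R_open (U : R -> Prop) : Prop :=
  forall x, U x -> exists e, 0 < e /\ forall y, Rabs (y - x) < e -> U y.

Lemma R_open_full : R_open (fun _ => True).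
Proof. intros x _; exists 1; split; [lra | auto]. Qed.

Lemma R_open_inter : forall U V, R_open U -> R_open V -> R_open (fun x => U x /\ V x).
Proof.
  intros U V HU HV x [Ux Vx].
  destruct (HU x Ux) as [e1 [He1 H1]]; destruct (HV x Vx) as [e2 [He2 H2]].
  exists (Rmin e1 e2); split.
  - apply Rmin_pos; assumption.
  - intros y Hy; split.
    + apply H1; eapply Rlt_le_trans; [exact Hy | apply Rmin_l].
    + apply H2; eapply Rlt_le_trans; [exact Hy | apply Rmin_r].
Qed.

Lemma R_open_union : forall F : (R -> Prop) -> Prop,
  (forall U, F U -> R_open U) -> R_open (fun x => exists U, F U /\ U x).
Proof.
  intros F HF x [U [FU Ux]].
  destruct (HF U FU x Ux) as [e [He H]].
  exists e; split; [exact He|]. intros y Hy; exists U; auto.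
Qed.

Definition R_top : TopSpace :=
  {| carrier := R; open := R_open; open_full := R_open_full;
     open_inter := R_open_inter; open_union := R_open_union |}.

Definition C (X : TopSpace) := cmap X R_top.

Definition ccomp {X Y : TopSpace} (phi : C Y) (f : cmap X Y) : C X :=
  {| cfun := fun x => phi (f x);
     cfun_cont := fun V hV => cfun_cont f _ (cfun_cont phi V hV) |}.

Inductive gen_open {T : Type} (S : (T -> Prop) -> Prop) : (T -> Prop) -> Prop :=
  | go_sub : forall U, S U -> gen_open S U
  | go_full : gen_open S (fun _ => True)
  | go_inter : forall U V, gen_open S U -> gen_open S V -> gen_open S (fun x => U x /\ V x)
  | go_union : forall F : (T -> Prop) -> Prop,
      (forall U, F U -> gen_open S U) -> gen_open S (fun x => exists U, F U /\ U x).

Definition gen_top (T : Type) (S : (T -> Prop) -> Prop) : TopSpace :=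
  {| carrier := T; open := gen_open S; open_full := @go_full T S;
     open_inter := @go_inter T S; open_union := @go_union T S |}.

(** Topology of pointwise convergence on a set of functionals C(X) -> R *)
Definition pw_sub (X : TopSpace) (P : (C X -> R) -> Prop)
  : ({m : C X -> R | P m} -> Prop) -> Prop :=
  fun V => exists (phi : C X) (U : R -> Prop),
     R_open U /\ forall mu, V mu <-> U (proj1_sig mu phi).

Definition pw_top (X : TopSpace) (P : (C X -> R) -> Prop) : TopSpace :=
  gen_top (@pw_sub X P).

Definition bar {X : TopSpace} {P : (C X -> R) -> Prop} (phi : C X)
  : C (@pw_top X P) :=
  {| cfun := fun mu : @pw_top X P => (proj1_sig mu phi : R_top);
     cfun_cont := fun V hV =>
        @go_sub _ (@pw_sub X P) _ (ex_intro _ phi (ex_intro _ V (conj hV (fun mu => iff_refl _)))) |}.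

Definition is_maxmin {X : TopSpace} (mu : C X -> R) : Prop :=
  (forall (phi : C X) (c : R), (forall x, phi x = c) -> mu phi = c) /\
  (forall phi psi chi : C X, (forall x, chi x = Rmax (phi x) (psi x)) ->
        mu chi = Rmax (mu phi) (mu psi)) /\
  (forall (c : R) (phi chi : C X), (forall x, chi x = Rmin c (phi x)) ->
        mu chi = Rmin c (mu phi)).

Definition is_maxplus {X : TopSpace} (mu : C X -> R) : Prop :=
  (forall (phi : C X) (c : R), (forall x, phi x = c) -> mu phi = c) /\
  (forall phi psi chi : C X, (forall x, chi x = Rmax (phi x) (psi x)) ->
        mu chi = Rmax (mu phi) (mu psi)) /\
  (forall (c : R) (phi chi : C X), (forall x, chi x = c + phi x) ->
        mu chi = c + mu phi).

Definition J (X : TopSpace) : TopSpace := @pw_top X (@is_maxmin X).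
Definition I (X : TopSpace) : TopSpace := @pw_top X (@is_maxplus X).

Definition J_map {X Y : TopSpace} (f : cmap X Y) (mu : J X) : J Y.
Proof.
  refine (exist _ (fun phi => proj1_sig mu (ccomp phi f)) _).
  destruct mu as [m [H1 [H2 H3]]]; simpl.
  split; [|split].
  - intros phi c H; apply H1; intros x; apply H.
  - intros phi psi chi H; apply H2; intros x; apply H.
  - intros c phi chi H; apply H3; intros x; apply H.
Defined.

Definition I_map {X Y : TopSpace} (f : cmap X Y) (mu : I X) : I Y.
Proof.
  refine (exist _ (fun phi => proj1_sig mu (ccomp phi f)) _).
  destruct mu as [m [H1 [H2 H3]]]; simpl.
  split; [|split].
  - intros phi c H; apply H1; intros x; apply H.
  - intros phi psi chi H; apply H2; intros x; apply H.
  - intros c phi chi H; apply H3; intros x; apply H.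
Defined.

Definition deltaJ (X : TopSpace) (x : X) : J X.
Proof.
  refine (exist _ (fun phi : C X => phi x) _).
  split; [|split]; intros; auto.
Defined.

Definition deltaI (X : TopSpace) (x : X) : I X.
Proof.
  refine (exist _ (fun phi : C X => phi x) _).
  split; [|split]; intros; auto.
Defined.

Definition psi (X : TopSpace) (M : J (J X)) : J X.
Proof.
  refine (exist _ (fun phi : C X => proj1_sig M (@bar X (@is_maxmin X) phi)) _).
  destruct M as [m [H1 [H2 H3]]]; simpl.
  split; [|split].
  - intros phi c H; apply H1; intros [mu [K1 [K2 K3]]]; simpl; apply K1; exact H.
  - intros phi ps chi H; apply H2; intros [mu [K1 [K2 K3]]]; simpl; apply K2; exact H.
  - intros c phi chi H; apply H3; intros [mu [K1 [K2 K3]]]; simpl; apply K3; exact H.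
Defined.

Definition zeta (X : TopSpace) (M : I (I X)) : I X.
Proof.
  refine (exist _ (fun phi : C X => proj1_sig M (@bar X (@is_maxplus X) phi)) _).
  destruct M as [m [H1 [H2 H3]]]; simpl.
  split; [|split].
  - intros phi c H; apply H1; intros [mu [K1 [K2 K3]]]; simpl; apply K1; exact H.
  - intros phi ps chi H; apply H2; intros [mu [K1 [K2 K3]]]; simpl; apply K2; exact H.
  - intros c phi chi H; apply H3; intros [mu [K1 [K2 K3]]]; simpl; apply K3; exact H.
Defined.

(** Suppose [k : I -> J] were a monad isomorphism.  We test it on the discrete
    two-point space [2 = {true, false}] and on [M = I(f)(nu_{-1})], where
    [nu_u = delta_true \/ (u + delta_false)] and [f : 2 -> I(2)] sends [true] to
    [delta_true] and [false] to [nu_{-1}].  In [I] the multiplication adds the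
    shifts: [zeta(M) = nu_{-2}].  In [J], by naturality and [k o eta = eta], the
    right-hand side of the multiplication law is [psi(J(k o f)(k nu_{-1}))],
    which equals [k nu_{-1}] because [min] is idempotent (lemma
    [maxmin_absorb]).  Hence [k nu_{-2} = k nu_{-1}], contradicting injectivity.

    Naturality at [f] is only available when [I(2)] is compact Hausdorff; most
    of the file proves this.  Every max-plus measure on [2] has the form
    [twopt P Q] with [P, Q >= 0], [max(P, Q) = 1] (lemma
    [maxplus_two_point_form]), so [I(2)] is the image of [[-1, 1]] under a
    continuous parametrization [mu]; the general lemmas on the pointwise
    topology and on images of intervals then give compactness. *)

From Pilot Require Import Defs.
From Stdlib Require Import Reals Lra List ProofIrrelevance FunctionalExtensionality
  ClassicalEpsilon Classical.
Open Scope R_scope.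

Ltac rmm := unfold Rmax, Rmin in *; repeat destruct Rle_dec; lra.

Lemma sig_ext {A : Type} {P : A -> Prop} (a b : {x | P x}) :
  proj1_sig a = proj1_sig b -> a = b.
Proof. destruct a, b; simpl; intros ->; f_equal; apply proof_irrelevance. Qed.

Lemma R_open_ball (a d : R) : R_open (fun r => Rabs (r - a) < d).
Proof.
  intros x Hx. exists (d - Rabs (x - a)). split; [lra|].
  intros y Hy. pose proof (Rabs_triang (y - x) (x - a)) as Htri.
  replace (y - x + (x - a)) with (y - a) in Htri by ring. lra.
Qed.

(** The topology of pointwise convergence is Hausdorff: two distinct functionals
    differ at some [phi], and balls around their values at [phi] separate them. *)
Lemma pw_hausdorff (X : TopSpace) (P : (Defs.C X -> R) -> Prop) : hausdorff (pw_top P).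
Proof.
  intros m1 m2 Hne.
  assert (exists phi, proj1_sig m1 phi <> proj1_sig m2 phi) as [phi Hphi].
  { apply NNPP; intro Hall. apply Hne, sig_ext, functional_extensionality.
    intro phi. apply NNPP; intro Hd; apply Hall; exists phi; exact Hd. }
  set (a := proj1_sig m1 phi) in *. set (b := proj1_sig m2 phi) in *.
  set (d := Rabs (a - b) / 2).
  assert (Hd : 0 < Rabs (a - b)) by (apply Rabs_pos_lt; lra).
  exists (fun mu : pw_top P => Rabs (proj1_sig mu phi - a) < d),
         (fun mu : pw_top P => Rabs (proj1_sig mu phi - b) < d).
  split; [|split; [|split; [|split]]].
  - apply go_sub. exists phi, (fun r => Rabs (r - a) < d).
    split; [apply R_open_ball | intro; tauto].
  - apply go_sub. exists phi, (fun r => Rabs (r - b) < d).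
    split; [apply R_open_ball | intro; tauto].
  - simpl. fold a. unfold d. rewrite Rminus_diag, Rabs_R0. lra.
  - simpl. fold b. unfold d. rewrite Rminus_diag, Rabs_R0. lra.
  - intros z [H1 H2]. set (v := proj1_sig z phi) in *.
    pose proof (Rabs_triang (a - v) (v - b)) as Htri.
    replace (a - v + (v - b)) with (a - b) in Htri by ring.
    rewrite <- Rabs_Ropp in H1. replace (- (v - a)) with (a - v) in H1 by ring.
    unfold d in *. lra.
Qed.

Lemma continuity_pt_R_open (f : R -> R) (U : R -> Prop) :
  (forall t, continuity_pt f t) -> R_open U -> R_open (fun t => U (f t)).
Proof.
  intros Hf HU t Ht. destruct (HU (f t) Ht) as [e [He He2]].
  destruct (Hf t e He) as [d [Hd Hd']].
  exists d. split; auto. intros y Hy.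
  destruct (Req_dec y t) as [->|Hne]; auto.
  apply He2, (Hd' y). split; [split; [exact Logic.I | auto] | exact Hy].
Qed.

(** A path [R -> pw_top P] is continuous as soon as each coordinate
    [t |-> f t (phi)] is continuous: it suffices to test the generating opens. *)
Lemma pw_continuous_from_R (X : TopSpace) (P : (Defs.C X -> R) -> Prop) (f : R_top -> pw_top P) :
  (forall phi t, continuity_pt (fun s => proj1_sig (f s) phi) t) -> continuous f.
Proof.
  intros Hf V HV. simpl in HV |- *. induction HV as [V [phi [U [HU HUV]]]| | |F _ IH].
  - intros t Ht. apply HUV in Ht.
    destruct (continuity_pt_R_open _ U (Hf phi) HU t Ht) as [e [He H']].
    exists e; split; auto. intros y Hy; apply HUV, H', Hy.
  - apply R_open_full.
  - apply R_open_inter; assumption.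
  - intros t [U [FU Ut]]. destruct (IH U FU t Ut) as [e [He H']].
    exists e; split; auto. intros y Hy; exists U; auto.
Qed.

(** A continuous image of a compact interval [[a, b]] is compact (via the
    Heine-Borel property [compact_P3] of the interval). *)
Lemma compact_of_interval_image (Y : TopSpace) (f : R_top -> Y) (a b : R) :
  continuous f -> (forall y : Y, exists t, a <= t <= b /\ y = f t) -> Defs.compact Y.
Proof.
  intros Hf Hsurj F HF Hcov.
  pose (Uc := fun t => proj1_sig (constructive_indefinite_description _ (Hcov (f t)))).
  assert (HUc : forall t, F (Uc t) /\ Uc t (f t)).
  { intro t. unfold Uc. destruct (constructive_indefinite_description _ _); simpl; auto. }
  pose (fam := mkfamily (fun t => a <= t <= b) (fun x y => (a <= x <= b) /\ Uc x (f y))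
                 (fun x H => match H with ex_intro _ _ (conj h _) => h end)).
  destruct (compact_P3 a b fam) as [D [Hfcov [l Hl]]].
  { split.
    - intros x Hx. exists x. simpl. split; auto. apply HUc.
    - intros x y [Hx Hy]. destruct (HUc x) as [FU _].
      destruct (Hf _ (HF _ FU) y Hy) as [e [He H']].
      exists (mkposreal e He). intros z Hz. split; auto. }
  exists (map Uc l). split.
  - intros U HU. apply in_map_iff in HU. destruct HU as [x [<- _]]. apply HUc.
  - intros y. destruct (Hsurj y) as [t [Ht ->]].
    destruct (Hfcov t Ht) as [x [[Hx HUx] HD]].
    exists (Uc x). split; auto. apply in_map, Hl. split; auto.
Qed.

Lemma glb_ex (S : R -> Prop) (b : R) : (exists s, S s) -> (forall s, S s -> b <= s) ->
  exists g, (forall s, S s -> g <= s) /\ (forall z, g < z -> exists s, S s /\ s < z) /\ b <= g.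
Proof.
  intros [s0 Hs0] Hb.
  destruct (completeness (fun x => S (- x))) as [l [Hub Hl]].
  - exists (- b). intros x Hx. apply Hb in Hx. lra.
  - exists (- s0). rewrite Ropp_involutive. auto.
  - assert (Hlow : forall s, S s -> - l <= s).
    { intros s Hs. assert (- s <= l) by (apply Hub; rewrite Ropp_involutive; auto). lra. }
    assert (Happrox : forall z, - l < z -> exists s, S s /\ s < z).
    { intros z Hz. apply NNPP; intro Hn.
      assert (l <= - z); [|lra].
      apply Hl. intros x Hx. apply NNPP; intro Hc. apply Hn. exists (- x). split; auto. lra. }
    exists (- l). split; [exact Hlow | split; [exact Happrox|]].
    apply Rnot_lt_le; intro Hlt. destruct (Happrox b Hlt) as [s [Hs Hsb]].
    specialize (Hb s Hs). lra.
Qed.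

Lemma Rmax_nondecreasing (f : R -> R) (x y : R) :
  (forall a b, a <= b -> f a <= f b) -> f (Rmax x y) = Rmax (f x) (f y).
Proof.
  intros Hf. apply Rmax_case_strong; intro Hxy.
  - rewrite Rmax_left; auto.
  - rewrite Rmax_right; auto.
Qed.

Lemma exp_max (x y : R) : exp (Rmax x y) = Rmax (exp x) (exp y).
Proof.
  apply Rmax_nondecreasing. intros a b [Hab| ->]; [left; apply exp_increasing, Hab | right; auto].
Qed.

Lemma ln_max (x y : R) : 0 < x -> 0 < y -> ln (Rmax x y) = Rmax (ln x) (ln y).
Proof. intros Hx Hy. rewrite <- (exp_ln x Hx), <- (exp_ln y Hy), <- exp_max, !ln_exp. reflexivity. Qed.

Lemma exp_minus (x y : R) : exp (x - y) = exp x / exp y.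
Proof. unfold Rminus, Rdiv. rewrite exp_plus, exp_Ropp. reflexivity. Qed.

(** Pointwise continuity of [Rmax] and [Rmin] of continuous functions,
    through [Rmax x y = (x + y + |x - y|) / 2]. *)
Lemma continuity_pt_Rmax (f g : R -> R) (x : R) : continuity_pt f x -> continuity_pt g x ->
  continuity_pt (fun y => Rmax (f y) (g y)) x.
Proof.
  intros Hf Hg.
  replace (fun y => Rmax (f y) (g y)) with (fun y => (f y + g y + Rabs (f y - g y)) * / 2)
    by (apply functional_extensionality; intro y; unfold Rmax, Rabs;
        destruct Rle_dec, Rcase_abs; lra).
  apply (continuity_pt_mult (fun y => f y + g y + Rabs (f y - g y)) (fun _ => / 2)).
  - apply (continuity_pt_plus (fun y => f y + g y) (fun y => Rabs (f y - g y))).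
    + apply (continuity_pt_plus f g); auto.
    + apply (continuity_pt_comp (fun y => f y - g y) Rabs).
      * apply (continuity_pt_minus f g); auto.
      * apply Rcontinuity_abs.
  - apply continuity_pt_const; intros ? ?; reflexivity.
Qed.

Lemma continuity_pt_Rmin (f g : R -> R) (x : R) : continuity_pt f x -> continuity_pt g x ->
  continuity_pt (fun y => Rmin (f y) (g y)) x.
Proof.
  intros Hf Hg.
  replace (fun y => Rmin (f y) (g y)) with (fun y => - Rmax (- f y) (- g y))
    by (apply functional_extensionality; intro y; rewrite Ropp_Rmax, !Ropp_involutive; reflexivity).
  apply (continuity_pt_opp (fun y => Rmax (- f y) (- g y))).
  apply continuity_pt_Rmax; apply (continuity_pt_opp); assumption.
Qed.

Definition bool_top : TopSpace :=
  {| carrier := bool; open := fun _ => True;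
     open_full := Logic.I; open_inter := fun _ _ _ _ => Logic.I;
     open_union := fun _ _ => Logic.I |}.

Lemma bool_CH : CompHaus bool_top.
Proof.
  split.
  - intros F HF Hc.
    destruct (Hc true) as [U [FU Ut]]. destruct (Hc false) as [V [FV Vf]].
    exists (U :: V :: nil). split.
    + intros W [<-|[<-|[]]]; auto.
    + intros [|]; [exists U | exists V]; simpl; auto.
  - intros x y Hxy. exists (fun z => z = x), (fun z => z = y).
    repeat split; simpl; auto. intros z [-> ->]; auto.
Qed.

Definition bool_map {Y : TopSpace} (f : bool -> Y) : cmap bool_top Y :=
  {| cfun := (f : bool_top -> Y); cfun_cont := fun _ _ => Logic.I |}.

Definition pt (a b : R) : Defs.C bool_top :=
  @bool_map R_top (fun x => if x then a else b).

(** ** Max-min measures on [2] *)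
Section MaxMinTwoPoint.
Variable m : Defs.C bool_top -> R.
Hypothesis Hm : is_maxmin m.

Lemma maxmin_decomp (L : R) (g : Defs.C bool_top) :
  Rabs (g true) < L -> Rabs (g false) < L ->
  m g = Rmax (Rmin (g true) (m (pt L (-L)))) (Rmin (g false) (m (pt (-L) L))).
Proof.
  destruct Hm as [_ [Hmax Hmin]]. intros Ht Hf.
  apply Rabs_def2 in Ht; apply Rabs_def2 in Hf.
  rewrite <- (Hmin (g true) _ (pt (Rmin (g true) L) (Rmin (g true) (-L)))) by (intros [|]; reflexivity).
  rewrite <- (Hmin (g false) _ (pt (Rmin (g false) (-L)) (Rmin (g false) L))) by (intros [|]; reflexivity).
  apply Hmax. intros [|]; simpl; rmm.
Qed.

(** Absorption: replacing the value at [false] by the measure itself does not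
    change the measure.  This is the idempotency [a /\ a = a] of [min] that
    distinguishes max-min from max-plus measures. *)
Lemma maxmin_absorb (phi chi : Defs.C bool_top) :
  chi true = phi true -> chi false = m phi -> m chi = m phi.
Proof.
  intros E1 E2.
  set (L := Rabs (phi true) + Rabs (phi false) + Rabs (m phi) + 1).
  pose proof (Rabs_pos (phi true)); pose proof (Rabs_pos (phi false));
    pose proof (Rabs_pos (m phi)).
  assert (Ht : Rabs (phi true) < L) by (unfold L; lra).
  assert (Hf : Rabs (phi false) < L) by (unfold L; lra).
  assert (Hv : Rabs (m phi) < L) by (unfold L; lra).
  pose proof (maxmin_decomp L phi Ht Hf) as Dphi.
  rewrite (maxmin_decomp L chi); [| rewrite E1; exact Ht | rewrite E2; exact Hv].
  rewrite E1, E2, Dphi. rmm.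
Qed.

End MaxMinTwoPoint.

(** ** Max-plus measures on [2] *)

(** The max-plus measure [g |-> ln (P e^{g(true)} \/ Q e^{g(false)})], i.e.
    [(ln P + delta_true) \/ (ln Q + delta_false)] with [ln 0 = -oo]. *)
Definition twopt (P Q : R) (g : Defs.C bool_top) : R :=
  ln (Rmax (P * exp (g true)) (Q * exp (g false))).

(** One of the weights is [1], so the argument of [ln] is positive. *)
Lemma twopt_arg_pos (P Q a b : R) : 0 <= P -> 0 <= Q -> Rmax P Q = 1 ->
  0 < Rmax (P * exp a) (Q * exp b).
Proof.
  intros HP HQ H1. pose proof (exp_pos a); pose proof (exp_pos b).
  revert H1. unfold Rmax; repeat destruct Rle_dec; intros; subst; nra.
Qed.

Lemma twopt_maxplus (P Q : R) : 0 <= P -> 0 <= Q -> Rmax P Q = 1 -> is_maxplus (twopt P Q).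
Proof.
  intros HP HQ H1. unfold twopt. split; [|split].
  - intros phi c H. rewrite !H, (Rmult_comm P), (Rmult_comm Q), RmaxRmult, H1, Rmult_1_r
      by (left; apply exp_pos).
    apply ln_exp.
  - intros phi psi chi H. rewrite !H, !exp_max, <- !RmaxRmult by assumption.
    rewrite <- ln_max by (apply twopt_arg_pos; assumption). f_equal.
    rewrite !Rmax_assoc. f_equal. rewrite <- !Rmax_assoc. f_equal. apply Rmax_comm.
  - intros c phi chi H. rewrite !H, !exp_plus.
    replace (P * (exp c * exp (phi true))) with (exp c * (P * exp (phi true))) by ring.
    replace (Q * (exp c * exp (phi false))) with (exp c * (Q * exp (phi false))) by ring.
    rewrite RmaxRmult by (left; apply exp_pos).
    rewrite ln_mult, ln_exp; [reflexivity | apply exp_pos | apply twopt_arg_pos; assumption].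
Qed.

Section MaxPlusTwoPoint.
Variable m : Defs.C bool_top -> R.
Hypothesis Hm : is_maxplus m.

(** By translation invariance [m] is determined by [h y = m (pt 0 y)];
    we study [E = exp o h]. *)
Let E (y : R) : R := exp (m (pt 0 y)).

Lemma maxplus_translate (g : Defs.C bool_top) :
  m g = g true + m (pt 0 (g false - g true)).
Proof.
  destruct Hm as [_ [_ Htr]]. apply Htr.
  intros [|]; simpl; lra.
Qed.

(** Splitting [pt 0 y = pt 0 (y - L) \/ pt (-c) y] gives a functional equation for [E]. *)
Lemma maxplus_split (y L c : R) : 0 <= L -> 0 <= c ->
  E y = Rmax (E (y - L)) (E (y + c) / exp c).
Proof.
  intros HL Hc. destruct Hm as [_ [Hmax _]].
  replace (E (y + c) / exp c) with (exp (m (pt (- c) y)))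
    by (unfold E; rewrite (maxplus_translate (pt (- c) y)); simpl;
        rewrite exp_plus, exp_Ropp; replace (y - - c) with (y + c) by ring;
        field; apply Rgt_not_eq, exp_pos).
  unfold E. rewrite <- exp_max, <- (Hmax _ _ (pt 0 y)); [reflexivity|].
  intros [|]; simpl; rmm.
Qed.

(** Taking [c = 0], resp. [L = 0], in the functional equation: [E] is
    nondecreasing and [E(y) e^{-y}] is nonincreasing. *)
Lemma E_nondecreasing (a b : R) : a <= b -> E a <= E b.
Proof.
  intros Hab. rewrite (maxplus_split b (b - a) 0) by lra.
  replace (b - (b - a)) with a by ring. apply Rmax_l.
Qed.

Lemma E_decay (a b : R) : a <= b -> E b / exp b <= E a / exp a.
Proof.
  intros Hab. rewrite (maxplus_split a 0 (b - a)) by lra.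
  replace (a + (b - a)) with b by ring.
  apply Rle_trans with (E b / exp (b - a) / exp a).
  - right. rewrite exp_minus. field. split; apply Rgt_not_eq, exp_pos.
  - apply Rmult_le_compat_r; [left; apply Rinv_0_lt_compat, exp_pos | apply Rmax_r].
Qed.

(** [E y = P \/ Q e^y], where [P = inf E] and [Q = inf E(y) e^{-y}]. *)
Lemma E_form : exists P Q, 0 <= P /\ 0 <= Q /\ forall y, E y = Rmax P (Q * exp y).
Proof.
  destruct (glb_ex (fun s => exists y, s = E y) 0) as [P [HPlow [HPapprox HP0]]].
  { exists (E 0), 0; reflexivity. }
  { intros s [y ->]. left; apply exp_pos. }
  destruct (glb_ex (fun s => exists y, s = E y / exp y) 0) as [Q [HQlow [HQapprox HQ0]]].
  { exists (E 0 / exp 0), 0; reflexivity. }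
  { intros s [y ->]. left; apply Rdiv_lt_0_compat; [apply exp_pos | apply exp_pos]. }
  exists P, Q. split; [exact HP0 | split; [exact HQ0|]]. intro y.
  pose proof (exp_pos y) as Hey.
  apply Rle_antisym.
  - apply Rnot_lt_le; intro Hlt.
    destruct (HPapprox (E y)) as [s [[a ->] Ha]]; [eapply Rle_lt_trans; [apply Rmax_l | exact Hlt]|].
    destruct (HQapprox (E y / exp y)) as [s [[b ->] Hb]].
    { apply Rmult_lt_reg_r with (exp y); [exact Hey|].
      replace (E y / exp y * exp y) with (E y) by (field; lra).
      eapply Rle_lt_trans; [apply Rmax_r | exact Hlt]. }
    assert (Hay : a < y) by (apply Rnot_le_lt; intro; pose proof (E_nondecreasing y a); lra).
    assert (Hyb : y < b) by (apply Rnot_le_lt; intro; pose proof (E_decay b y); lra).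
    pose proof (maxplus_split y (y - a) (b - y) ltac:(lra) ltac:(lra)) as Hsplit.
    replace (y - (y - a)) with a in Hsplit by ring. replace (y + (b - y)) with b in Hsplit by ring.
    assert (Hb' : E b / exp (b - y) < E y).
    { rewrite exp_minus. apply Rmult_lt_reg_r with (/ exp y); [apply Rinv_0_lt_compat, Hey|].
      replace (E b / (exp b / exp y) * / exp y) with (E b / exp b)
        by (field; split; apply Rgt_not_eq, exp_pos). exact Hb. }
    pose proof (Rmax_lub_lt _ _ _ Ha Hb'). lra.
  - apply Rmax_lub; [apply HPlow; exists y; reflexivity|].
    apply Rmult_le_reg_r with (/ exp y); [apply Rinv_0_lt_compat, Hey|].
    replace (Q * exp y * / exp y) with Q by (field; lra).
    apply HQlow. exists y; reflexivity.
Qed.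

Lemma maxplus_two_point_form :
  exists P Q, 0 <= P /\ 0 <= Q /\ Rmax P Q = 1 /\ forall g, m g = twopt P Q g.
Proof.
  destruct E_form as [P [Q [HP [HQ HE]]]].
  exists P, Q. split; [exact HP | split; [exact HQ | split]].
  - destruct Hm as [Hconst _].
    assert (HE0 : E 0 = 1).
    { unfold E. rewrite (Hconst _ 0) by (intros [|]; reflexivity). apply exp_0. }
    rewrite HE, exp_0, Rmult_1_r in HE0. exact HE0.
  - intro g. unfold twopt. rewrite maxplus_translate.
    set (d := g false - g true). replace (g false) with (g true + d) by (unfold d; lra).
    rewrite exp_plus, (Rmult_comm P), (Rmult_comm Q), Rmult_assoc, RmaxRmult
      by (left; apply exp_pos).
    rewrite (Rmult_comm (exp d)), <- HE. unfold E.
    rewrite ln_mult, !ln_exp; [reflexivity | apply exp_pos | apply exp_pos].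
Qed.

End MaxPlusTwoPoint.

(** ** [I(2)] is a continuous image of [[-1, 1]], hence compact Hausdorff *)

(** Clamping to [[0, 1]]; the weights [(W0 t, W1 t)] run along the boundary
    [max(P, Q) = 1] of [[0,1]^2] as [t] runs through [[-1, 1]]. *)
Definition clamp01 (x : R) : R := Rmin 1 (Rmax 0 x).
Definition W0 (t : R) : R := clamp01 (1 - t).
Definition W1 (t : R) : R := clamp01 (1 + t).

Lemma W_props (t : R) : 0 <= W0 t /\ 0 <= W1 t /\ Rmax (W0 t) (W1 t) = 1.
Proof. unfold W0, W1, clamp01. split; [|split]; rmm. Qed.

Lemma W_surj (P Q : R) : 0 <= P -> 0 <= Q -> Rmax P Q = 1 ->
  exists t, -1 <= t <= 1 /\ W0 t = P /\ W1 t = Q.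
Proof.
  intros HP HQ H1. destruct (Req_dec P 1) as [->|HP1].
  - exists (Q - 1). unfold W0, W1, clamp01. split; [|split]; rmm.
  - exists (1 - P). unfold W0, W1, clamp01. split; [|split]; rmm.
Qed.

Lemma continuity_pt_clamp01 (f : R -> R) (x : R) :
  continuity_pt f x -> continuity_pt (fun y => clamp01 (f y)) x.
Proof.
  intros Hf. unfold clamp01.
  apply (continuity_pt_Rmin (fun _ => 1)); [apply continuity_pt_const; intros ? ?; reflexivity|].
  apply (continuity_pt_Rmax (fun _ => 0)); [apply continuity_pt_const; intros ? ?; reflexivity|].
  exact Hf.
Qed.

Definition mu (t : R) : I bool_top :=
  let '(conj H0 (conj H1 Hmax)) := W_props t in
  exist _ (twopt (W0 t) (W1 t)) (twopt_maxplus _ _ H0 H1 Hmax).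

(** Evaluation of [mu t]; [mu] itself hides the positivity proofs. *)
Lemma mu_val (t : R) (g : Defs.C bool_top) : proj1_sig (mu t) g = twopt (W0 t) (W1 t) g.
Proof. unfold mu. destruct (W_props t) as [? [? ?]]. reflexivity. Qed.

Lemma mu_continuous : @continuous R_top (I bool_top) mu.
Proof.
  apply pw_continuous_from_R. intros g t.
  replace (fun s => proj1_sig (mu s) g) with (fun s => twopt (W0 s) (W1 s) g)
    by (apply functional_extensionality; intro; symmetry; apply mu_val).
  unfold twopt.
  pose proof (W_props t) as [HP [HQ H1]].
  apply (continuity_pt_comp (fun s => Rmax (W0 s * exp (g true)) (W1 s * exp (g false))) ln).
  - assert (Hcst : forall c, continuity_pt (fun _ => c) t)
      by (intro c; apply continuity_pt_const; intros ? ?; reflexivity).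
    assert (Hid : continuity_pt (fun s => s) t)
      by (apply derivable_continuous_pt; exists 1; apply derivable_pt_lim_id).
    apply continuity_pt_Rmax;
      [apply (continuity_pt_mult W0 (fun _ => exp (g true)))
      |apply (continuity_pt_mult W1 (fun _ => exp (g false)))]; try apply Hcst.
    + apply continuity_pt_clamp01, (continuity_pt_minus (fun _ => 1) (fun s => s)); auto.
    + apply continuity_pt_clamp01, (continuity_pt_plus (fun _ => 1) (fun s => s)); auto.
  - apply derivable_continuous_pt. eexists. apply derivable_pt_lim_ln, twopt_arg_pos; assumption.
Qed.

(** [mu] maps [[-1, 1]] onto [I(2)], by the two-point form of max-plus measures. *)
Lemma mu_surj (n : I bool_top) : exists t, -1 <= t <= 1 /\ n = mu t.
Proof.
  destruct n as [m Hm].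
  destruct (maxplus_two_point_form m Hm) as [P [Q [HP [HQ [H1 Hform]]]]].
  destruct (W_surj P Q HP HQ H1) as [t [Ht [<- <-]]].
  exists t. split; [exact Ht|]. apply sig_ext, functional_extensionality. intro g.
  rewrite mu_val. apply Hform.
Qed.

Lemma I_bool_CH : CompHaus (I bool_top).
Proof.
  split; [|apply pw_hausdorff].
  apply (compact_of_interval_image _ mu (-1) 1 mu_continuous mu_surj).
Qed.

(** ** The counterexample *)

(** [nu u = delta_true \/ (min(0, u) + delta_false)], an element of [I(2)]. *)
Lemma nu_maxplus (u : R) :
  is_maxplus (fun g : Defs.C bool_top => Rmax (g true) (g false + Rmin 0 u)).
Proof.
  split; [|split].
  - intros phi c H. rewrite !H. rmm.
  - intros phi psi chi H. rewrite !H. rmm.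
  - intros c phi chi H. rewrite !H. rmm.
Qed.

Definition nu (u : R) : I bool_top := exist _ _ (nu_maxplus u).

(** [nu (-2)] and [nu (-1)] differ on the function [pt 0 2]. *)
Lemma nu_distinct : nu (-2) <> nu (-1).
Proof.
  intro E. apply (f_equal (fun n => proj1_sig n (pt 0 2))) in E. simpl in E. revert E. rmm.
Qed.

Definition fmap : cmap bool_top (I bool_top) :=
  bool_map (fun b => if b then deltaI bool_top true else nu (-1)).

(** In [I] the multiplication composes the shifts: [-1 + -1 = -2]. *)
Lemma zeta_fmap_nu : zeta (I_map fmap (nu (-1))) = nu (-2).
Proof. apply sig_ext, functional_extensionality; intro phi. simpl. rmm. Qed.

Lemma psi_absorb (Y : TopSpace) (f : cmap bool_top Y) (kk : cmap Y (J bool_top))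
    (n : J bool_top) :
  kk (f true) = deltaJ bool_top true -> kk (f false) = n -> psi (J_map kk (J_map f n)) = n.
Proof.
  intros Htrue Hfalse. apply sig_ext, functional_extensionality; intro phi.
  destruct n as [m Hm]. simpl. apply (maxmin_absorb m Hm).
  - simpl. rewrite Htrue. reflexivity.
  - simpl. rewrite Hfalse. reflexivity.
Qed.

Theorem mainTheorem17 :
  ~ exists k : forall X : TopSpace, I X -> J X,
      (forall X : TopSpace, CompHaus X ->
          continuous (k X) /\
          exists g : J X -> I X, continuous g /\
            (forall m, g (k X m) = m) /\ (forall n, k X (g n) = n)) /\
      (forall (X Y : TopSpace) (f : cmap X Y), CompHaus X -> CompHaus Y ->
          forall m : I X, k Y (I_map f m) = J_map f (k X m)) /\
      (forall X : TopSpace, CompHaus X -> forall x : X, k X (@deltaI X x) = @deltaJ X x) /\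
      (forall (X : TopSpace) (hk : continuous (k X)), CompHaus X ->
          forall M : I (I X),
            k X (@zeta X M) = @psi X (J_map {| cfun := k X; cfun_cont := hk |} (k (I X) M))).
Proof.
  intros [k [Hiso [Hnat [Hunit Hmult]]]].
  destruct (Hiso bool_top bool_CH) as [hk [g [_ [g_k _]]]].
  pose proof (Hmult bool_top hk bool_CH (I_map fmap (nu (-1)))) as Hlaw.
  (* [k (I 2) o I(f) = J(f) o k 2] since [2] and [I(2)] are compact Hausdorff *)
  rewrite zeta_fmap_nu, (Hnat _ _ fmap bool_CH I_bool_CH) in Hlaw.
  (* [k (delta_true) = delta_true], so the right-hand side collapses to [k (nu (-1))] *)
  rewrite psi_absorb in Hlaw; [| apply Hunit, bool_CH | reflexivity].
  (* [k] is injective *)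
  apply nu_distinct. rewrite <- (g_k (nu (-2))), <- (g_k (nu (-1))), Hlaw. reflexivity.
Qed.
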